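(* Fix $\alpha\in\{\text{rotor routing},\ \text{Bernardi}\}$, and for a ribbon graph $(H,\sigma)$ and $u\in V(H)$ write $\alpha_u^{H}:\operatorname{Pic}^0(H)\times\mathcal T(H)\to\mathcal T(H)$ for the corresponding sandpile torsor with basepoint $u$. There exist ribbon graphs $(G,\rho)$ and $(G',\rho')$ of genera $g$ and $g'$, with $V(G)=V(G')$, together with a bijection $\varphi:\mathcal T(G)\to\mathcal T(G')$ and a group isomorphism $\gamma:\operatorname{Pic}^0(G)\to\operatorname{Pic}^0(G')$, such that for every vertex $v\in V(G)$, every $S\in\operatorname{Pic}^0(G)$ and every $T\in\mathcal T(G)$, $$\varphi\big(\alpha_v^{G}(S,T)\big)=\alpha_v^{G'}\big(\gamma(S),\varphi(T)\big),$$ and such that $g\neq g'$.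
   Context: Graphs are finite and connected, may have multiple edges, and have no loops. $\mathcal T(G)$ is the set of spanning trees of $G$ (as subsets of $E(G)$). A ribbon graph $(G,\rho)$ is a graph $G$ together with, for each vertex $u$, a cyclic order $\rho_u$ on the edges incident to $u$. $\operatorname{Div}^0(G)$ is the group of integer vectors $\sum_u n_u u$ with $\sum n_u=0$ (chip configurations); firing a vertex $u$ moves one chip from $u$ along each edge incident to $u$; $\operatorname{Pic}^0(G)=\operatorname{Div}^0(G)/\operatorname{im}(\Delta)$, where $\Delta$ is the graph Laplacian, i.e. two degree-zero divisors are equivalent iff they differ by an integer combination of firings. More generally $\operatorname{Pic}^k(G)$ is the set of degree-$k$ divisors modulo the same equivalence. Rotor routing torsor $r_v$ (basepoint $v$): for $S\in\operatorname{Pic}^0(G)$ and $T\in\mathcal T(G)$, choose a representative of $S$ with nonnegative chips at every vertex other than $v$; orient $T$ towards $v$, so each $u\neq v$ has one outgoing edge (its rotor). While some $u\neq v$ has a positive number of chips, pick such a $u$, advance its rotor to the next edge in $\rho_u$, and send one chip from $u$ along this new rotor edge to its other endpoint. When all vertices other than $v$ have zero chips, the rotors (unoriented) form a spanning tree $r_v(S,T)$; this is independent of all choices and defines a free transitive action. Bernardi torsor $\beta_v$: an edge $e$ with endpoints $u_1,u_2$ has half-edges $(e,u_1),(e,u_2)$. For $T\in\mathcal T(G)$, fix an edge $e_0$ incident to $v$ and start at the half-edge $(e_0,v)$. At current half-edge $(e',v')$: if $e'\in T$, let $w'$ be the other endpoint of $e'$ and move to $(e'',w')$ where $e''$ follows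 $e'$ in $\rho_{w'}$; if $e'\notin T$, move to $(\tilde e,v')$ where $\tilde e$ follows $e'$ in $\rho_{v'}$, and place a chip on $v'$ if the other half-edge of $e'$ has not yet been visited. Stop on returning to $(e_0,v)$. The resulting divisor $D_T$ has degree $|E(G)|-|V(G)|+1=:k$; the classes $[D_T]\in\operatorname{Pic}^k(G)$ are distinct for distinct $T$ and exhaust $\operatorname{Pic}^k(G)$, and $\beta_v(S,T)$ is the unique $T'$ with $[D_{T'}]=[D_T]+S$ (independent of $e_0$). Genus: a cycle (face) of $(G,\rho)$ is a closed walk such that whenever it enters a vertex $u$ along an edge $e$ it leaves along the edge following $e$ in $\rho_u$; equivalently an orbit of the permutation of half-edges sending (edge $e$ leaving $u$ towards $u'$) to (edge following $e$ in $\rho_{u'}$, leaving $u'$). With $\operatorname{cyc}(G,\rho)$ the number of cycles, the genus $g$ of $(G,\rho)$ (the genus of the associated closed surface) satisfies $2g=2-|V(G)|+|E(G)|-\operatorname{cyc}(G,\rho)$. *)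

From mathcomp Require Import all_boot all_order all_algebra.
From Stdlib Require Import ClassicalEpsilon Relations.
Set Implicit Arguments.
Unset Strict Implicit.
Unset Printing Implicit Defensive.
Import GRing.Theory Num.Theory.
Local Open Scope ring_scope.

(* Edge e has endpoints (ends e).1 and (ends e).2.  Half-edges are E * bool:  *)
(* (e,false) is e at (ends e).1, (e,true) is e at (ends e).2.  Since graphs   *)
(* are loopless, an edge incident to u has exactly one half-edge at u, so the *)
(* cyclic order rho_u on edges at u is encoded by the permutation [rot] of    *)
(* half-edges: rot h is the half-edge (at the same vertex) of the edge        *)
(* following the edge of h in rho_u.                                          *)

Record ribbon_graph (V E : finType) := RibbonGraph {
  ends : E -> V * V;
  rot  : E * bool -> E * bool
}.

Section RibbonGraphs.
Variables (V E : finType).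
Implicit Types (G : ribbon_graph V E) (T : {set E}) (D : {ffun V -> int}).

Definition flip (h : E * bool) : E * bool := (h.1, ~~ h.2).

Definition hv G (h : E * bool) : V :=
  if h.2 then (ends G h.1).2 else (ends G h.1).1.

Definition adjF G (F : {set E}) : rel V :=
  fun x y => [exists e in F, (ends G e == (x, y)) || (ends G e == (y, x))].

Definition is_ribbon_graph G : Prop :=
  [/\ (0 < #|V|)%N,
      (forall e : E, (ends G e).1 != (ends G e).2),
      (forall x y : V, connect (adjF G setT) x y),
      injective (rot G) &
      (forall h, hv G (rot G h) = hv G h) /\
      (forall h h', hv G h = hv G h' -> fconnect (rot G) h h')].

Definition spanning_tree G T : bool :=
  (#|T| == #|V|.-1)%N && [forall x, forall y, connect (adjF G T) x y].

Definition deg_div D : int := \sum_(u : V) D u.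

Definition mult G (u w : V) : nat :=
  #|[set e : E | (ends G e == (u, w)) || (ends G e == (w, u))]|.
Definition vdeg G (u : V) : nat :=
  #|[set e : E | ((ends G e).1 == u) || ((ends G e).2 == u)]|.

Definition lap G (u w : V) : int :=
  if w == u then - (vdeg G u)%:Z else (mult G u w)%:Z.

Definition div_equiv G D1 D2 : Prop :=
  exists c : {ffun V -> int},
    forall w, D1 w - D2 w = \sum_(u : V) c u * lap G u w.

(* half-edge h (at vertex hv h) lies on T and points towards v along T *)
Definition oriented_toward G T (v : V) (h : E * bool) : bool :=
  (h.1 \in T) && connect (adjF G (T :\ h.1)) (hv G (flip h)) v.

Definition rr_state := ({ffun V -> int} * {ffun V -> E * bool})%type.

Definition rr_step G (v : V) (s s' : rr_state) : Prop :=
  exists u : V, [/\ u != v, 0 < s.1 u &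
    let h := rot G (s.2 u) in
    let w := hv G (flip h) in
    s'.2 = [ffun x => if x == u then h else s.2 x] /\
    s'.1 = [ffun x => s.1 x - (x == u)%:Z + (x == w)%:Z]].

Definition rr_steps G v := clos_refl_trans rr_state (rr_step G v).

Definition rotor_result G (v : V) D T (T' : {set E}) : Prop :=
  exists s0 s1 : rr_state,
    [/\ div_equiv G s0.1 D,
        (forall u, u != v -> 0 <= s0.1 u) &
        (forall u, u != v -> (hv G (s0.2 u) == u) && oriented_toward G T v (s0.2 u))] /\
    [/\ rr_steps G v s0 s1,
        (forall u, u != v -> s1.1 u = 0) &
        T' = [set e | [exists u, (u != v) && ((s1.2 u).1 == e)]]].

(* the rotor routing torsor r_v(S,T) (well defined by the paper's facts) *)
Definition rotor_torsor G (v : V) D T : {set E} :=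
  epsilon (inhabits T) (rotor_result G v D T).

Definition bern_step G T (h : E * bool) : E * bool :=
  if h.1 \in T then rot G (flip h) else rot G h.

Definition bern_div G (v : V) T : {ffun V -> int} :=
  match [pick h : E * bool | hv G h == v] with
  | None => [ffun => 0]
  | Some h0 =>
      let s := orbit (bern_step G T) h0 in
      [ffun u => (\sum_(i < size s |
                    let h := nth h0 s i in
                    [&& h.1 \notin T, hv G h == u & flip h \notin take i s]) 1%N)%:Z]
  end.

Definition bernardi_result G (v : V) D T (T' : {set E}) : Prop :=
  spanning_tree G T' /\ div_equiv G (bern_div G v T') (bern_div G v T + D).

Definition bernardi_torsor G (v : V) D T : {set E} :=
  epsilon (inhabits T) (bernardi_result G v D T).

(* face permutation: (e leaving u towards u') |-> (next edge after e at u') *)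
Definition face G (h : E * bool) : E * bool := rot G (flip h).

Definition ncycles G : nat := #|[set h | froot (face G) h == h]|.

Definition genus G : nat := (((2 + #|E|) - (#|V| + ncycles G))./2)%N.

End RibbonGraphs.

Inductive torsor_kind := RotorRouting | Bernardi.

Definition torsor (k : torsor_kind) {V E : finType} (G : ribbon_graph V E)
  (v : V) (D : {ffun V -> int}) (T : {set E}) : {set E} :=
  match k with
  | RotorRouting => rotor_torsor G v D T
  | Bernardi => bernardi_torsor G v D T
  end.

(* Both graphs are dipoles: two vertices joined by five parallel edges.  Their spanning
   trees are the single edges, and Pic^0 = Z/5, a degree-0 divisor being determined up to
   equivalence by its value at one vertex modulo 5.  G has rotations (0 1 2 3 4) and
   (0 1 3 4 2) and a single face, hence genus 2; G' has the cubes of these rotations and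
   more than one face, hence genus at most 1.  Take phi = id and gamma(S) = 2S.
   Rotor routing from the tree {t} with k chips on the non-sink u turns the rotor at u
   k times and yields {rho_u^k(t)}; as 2 * 3 = 1 mod 5, (rho_u^3)^(2k) = rho_u^k.
   For the Bernardi torsor the divisors D_t of both graphs are computed from their tours:
   they have degree 4 and [D'_t'] - [D'_t] = 2([D_t'] - [D_t]) in Z/5, so the relations
   defining the two torsors coincide. *)

From Pilot Require Import Defs.
From mathcomp Require Import all_boot all_order all_algebra zify ring.
From Stdlib Require Import ClassicalEpsilon FunctionalExtensionality PropExtensionality Relations.
Import GRing.Theory Num.Theory.

Set Implicit Arguments.
Unset Strict Implicit.
Unset Printing Implicit Defensive.

Local Open Scope ring_scope.

Definition all_ord n (P : pred 'I_n.+1) : bool := all (fun k => P (inZp k)) (iota 0 n.+1).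

Lemma all_ordP n (P : pred 'I_n.+1) : reflect (forall i, P i) (all_ord P).
Proof.
apply: (iffP allP) => [PP i | PP k _]; last exact: PP.
by have := PP i; rewrite mem_iota ltn_ord valZpK; apply.
Qed.

Lemma mem_uniq_card (T : finType) (s : seq T) x : uniq s -> size s = #|T| -> x \in s.
Proof.
move=> s_uniq s_size.
have sub : {subset s <= enum T} by move=> y _; rewrite mem_enum.
have size_enum : (size (enum T) <= size s)%N by rewrite -cardE s_size.
by have [_ ->] := uniq_min_size s_uniq sub size_enum; rewrite mem_enum.
Qed.

Lemma iter_modn (T : Type) (f : T -> T) n k x :
  iter n f x = x -> iter k f x = iter (k %% n) f x.
Proof.
move=> per; rewrite {1}(divn_eq k n) addnC iterD; congr iter.
by elim: (k %/ n)%N => // q IH; rewrite mulSn iterD IH per.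
Qed.

Lemma dvdz_cancel (m c c' : nat) (x : int) :
  (m %| c%:Z * c'%:Z - 1)%Z -> (m %| x *+ c)%Z -> (m %| x)%Z.
Proof.
move=> cc' mxc; have -> : x = x *+ c * c'%:Z - x * (c%:Z * c'%:Z - 1) by ring.
by apply: rpredB; [apply: dvdz_mulr | apply: dvdz_mull].
Qed.

Lemma dvdz_scale_iff (m c c' : nat) (x x' d : int) :
  (m %| c%:Z * c'%:Z - 1)%Z -> (m %| x' - x *+ c)%Z ->
  (m %| x - d)%Z = (m %| x' - d *+ c)%Z.
Proof.
move=> cc' mx; apply/idP/idP => md.
  have -> : x' - d *+ c = (x' - x *+ c) + (x - d) *+ c by ring.
  by rewrite rpredD ?rpredMn.
apply: (dvdz_cancel cc'); have -> : (x - d) *+ c = (x' - d *+ c) - (x' - x *+ c) by ring.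
by rewrite rpredB.
Qed.

Lemma ord2_cases (u : 'I_2) : u = ord0 \/ u = ord_max.
Proof. by case: u => -[|[|//]] ?; [left | right]; apply: val_inj. Qed.

Lemma ord2_other (u v x : 'I_2) : u != v -> x != v -> x = u.
Proof.
by case: (ord2_cases u) => ->; case: (ord2_cases v) => ->; case: (ord2_cases x) => ->.
Qed.

Lemma sum_ord2 (F : 'I_2 -> int) : \sum_(u < 2) F u = F ord0 + F ord_max.
Proof. by rewrite big_ord_recl big_ord1; congr (_ + F _); apply: val_inj. Qed.

Lemma deg_div2 (D : {ffun 'I_2 -> int}) : deg_div D = D ord0 + D ord_max.
Proof. exact: sum_ord2. Qed.

Lemma deg_divD (V : finType) (X Y : {ffun V -> int}) : deg_div (X + Y) = deg_div X + deg_div Y.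
Proof. by rewrite /deg_div -big_split; apply: eq_bigr => u _; rewrite ffunE. Qed.

Lemma deg_divMn (V : finType) (X : {ffun V -> int}) k : deg_div (X *+ k) = deg_div X *+ k.
Proof. by rewrite /deg_div -sumrMnl; apply: eq_bigr => u _; rewrite ffunMnE. Qed.

Lemma exists_nat_mod (m : nat) (d : int) : (0 < m)%N -> exists k : nat, (m %| k%:Z - d)%Z.
Proof.
move=> m_gt0; exists `|(d %% m)%Z|%N; rewrite gez0_abs ?modz_ge0 -?lt0n //.
by apply/dvdzP; exists (- (d %/ m)%Z); rewrite {2}(divz_eq d m); ring.
Qed.

Section FaceCount.
Variables (V E : finType) (G : ribbon_graph V E).
Hypothesis face_inj : injective (face G).

Lemma ncycles_eq1 h0 : (forall h, fconnect (face G) h0 h) -> ncycles G = 1%N.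
Proof.
move=> h0_conn; have sym := fconnect_sym face_inj.
rewrite /ncycles (_ : [set h | _] = [set froot (face G) h0]) ?cards1 //.
apply/setP=> h; rewrite !inE; apply/eqP/eqP => [<- | ->]; last exact: root_root.
by apply/(fingraph.rootP sym); rewrite sym.
Qed.

Lemma ncycles_gt1 h h' : ~~ fconnect (face G) h h' -> (1 < ncycles G)%N.
Proof.
move=> hh'; have sym := fconnect_sym face_inj.
apply/card_gt1P; exists (froot (face G) h), (froot (face G) h').
rewrite !inE !root_root //; split=> //.
by apply: contra hh' => /eqP/(fingraph.rootP sym).
Qed.

End FaceCount.

Definition bern_step1 (V E : finType) (G : ribbon_graph V E) (t : E) (h : E * bool) :=
  Defs.rot G (if h.1 == t then flip h else h).

Definition tour_chips (V E : finType) (G : ribbon_graph V E) (t : E) (h0 : E * bool)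
    (s : seq (E * bool)) (u : V) : nat :=
  count (fun i => let h := nth h0 s i in [&& h.1 != t, hv G h == u & flip h \notin take i s])
    (iota 0 (size s)).

Lemma bern_div_tour (V E : finType) (G : ribbon_graph V E) v t h0 n u :
  let s := traject (bern_step1 G t) h0 n.+1 in
  [pick h | hv G h == v] = Some h0 -> fcycle (bern_step1 G t) s -> uniq s ->
  bern_div G v [set t] u = (tour_chips G t h0 s u)%:Z.
Proof.
move=> s pick_v s_cycle s_uniq; rewrite /bern_div pick_v ffunE.
have -> : bern_step G [set t] = bern_step1 G t.
  by apply: functional_extensionality => h; rewrite /bern_step /bern_step1 in_set1; case: ifP.
rewrite (orbitE s_cycle s_uniq (mem_head _ _)) /= eqxx rot0.
set P := fun i => let h := nth h0 s i in
  [&& h.1 \notin [set t], hv G h == u & flip h \notin take i s].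
rewrite -(big_mkord P (fun=> 1%N)) sum1_count /index_iota subn0; congr Posz.
by apply: eq_count => i; rewrite /P in_set1.
Qed.

Section TorsorMorphisms.
Variables (V E E' : finType) (G : ribbon_graph V E) (G' : ribbon_graph V E').

Definition tree_bijection (phi : {set E} -> {set E'}) : Prop :=
  [/\ (forall T, spanning_tree G T -> spanning_tree G' (phi T)),
      (forall T1 T2, spanning_tree G T1 -> spanning_tree G T2 -> phi T1 = phi T2 -> T1 = T2) &
      (forall T', spanning_tree G' T' -> exists2 T, spanning_tree G T & phi T = T')].

Definition pic0_iso (gamma : {ffun V -> int} -> {ffun V -> int}) : Prop :=
  [/\ (forall D, deg_div D = 0 -> deg_div (gamma D) = 0),
      (forall D1 D2, deg_div D1 = 0 -> deg_div D2 = 0 ->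
         div_equiv G D1 D2 -> div_equiv G' (gamma D1) (gamma D2)),
      (forall D1 D2, deg_div D1 = 0 -> deg_div D2 = 0 ->
         div_equiv G' (gamma (D1 + D2)) (gamma D1 + gamma D2)),
      (forall D1 D2, deg_div D1 = 0 -> deg_div D2 = 0 ->
         div_equiv G' (gamma D1) (gamma D2) -> div_equiv G D1 D2) &
      (forall D', deg_div D' = 0 -> exists2 D, deg_div D = 0 & div_equiv G' (gamma D) D')].

End TorsorMorphisms.

Section Dipole.
Variable m : nat.

Definition edge_cycle (s : seq 'I_m) : bool := uniq s && (size s == m).

Definition dipole (sa sb : seq 'I_m) : ribbon_graph 'I_2 'I_m :=
  RibbonGraph (fun=> (ord0, ord_max)) (fun h => (next (if h.2 then sb else sa) h.1, h.2)).

Definition dipole_rot (sa sb : seq 'I_m) (u : 'I_2) : 'I_m -> 'I_m :=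
  next (if u == ord_max then sb else sa).

Variables sa sb : seq 'I_m.
Local Notation G := (dipole sa sb).

Lemma hv_dipole h : hv G h = if h.2 then ord_max else ord0.
Proof. by case: h => e []. Qed.

Lemma hv_dipole_eq h u : (hv G h == u) = (h.2 == (u == ord_max)).
Proof. by rewrite hv_dipole; case: h.2; case: (ord2_cases u) => ->. Qed.

Lemma hv_flip_dipole h : hv G (flip h) != hv G h.
Proof. by rewrite !hv_dipole; case: h => e []. Qed.

Lemma iter_rot_dipole n e b :
  iter n (Defs.rot G) (e, b) = (iter n (next (if b then sb else sa)) e, b).
Proof. by elim: n => //= n ->. Qed.

Lemma iter_rot_dipole_at n t u :
  iter n (Defs.rot G) (t, u == ord_max) = (iter n (dipole_rot sa sb u) t, u == ord_max).
Proof. exact: iter_rot_dipole. Qed.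

Lemma connect_dipole (F : {set 'I_m}) e (x y : 'I_2) : e \in F -> connect (adjF G F) x y.
Proof.
move=> eF; have [<- | xy] := eqVneq x y; first exact: connect0.
apply: connect1; apply/existsP; exists e; rewrite eF /=.
by move: xy; case: (ord2_cases x) => ->; case: (ord2_cases y) => ->.
Qed.

Lemma spanning_tree_dipole T : spanning_tree G T = (#|T| == 1%N).
Proof.
rewrite /spanning_tree card_ord; case: cards1P => [[t ->] | //].
by apply/'forall_forallP => x y; apply: (connect_dipole _ _ (set11 t)).
Qed.

Lemma lap_dipole u w : lap G u w = if w == u then - m%:Z else m%:Z.
Proof.
have all_edges (P : pred 'I_m) : (forall e, P e) -> #|[set e | P e]| = m.
  move=> PT; rewrite (_ : [set e | P e] = setT) ?cardsT ?card_ord //.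
  by apply/setP => e; rewrite !inE PT.
rewrite /lap; case: eqP => [_ | /eqP wu].
  by rewrite /vdeg all_edges // => e; case: (ord2_cases u) => ->.
rewrite /mult all_edges // => e.
by move: wu; case: (ord2_cases u) => ->; case: (ord2_cases w) => ->.
Qed.

Lemma div_equiv_dipole X Y u :
  div_equiv G X Y <-> deg_div X = deg_div Y /\ (m %| X u - Y u)%Z.
Proof.
rewrite !deg_div2.
have opp_diff : X ord0 + X ord_max = Y ord0 + Y ord_max ->
    X ord0 - Y ord0 = - (X ord_max - Y ord_max).
  by move=> XY; rewrite -[X ord0](addrK (X ord_max)) XY; ring.
apply: (@iff_trans _ (X ord0 + X ord_max = Y ord0 + Y ord_max /\
                      (m %| X ord_max - Y ord_max)%Z)); last first.
  case: (ord2_cases u) => -> //.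
  by split=> -[XY mXY]; split=> //; move: mXY; rewrite opp_diff // rpredN.
split.
  case=> c XY; have := XY ord0; have := XY ord_max; rewrite !sum_ord2 !lap_dipole /=.
  move=> XY1 XY0; split.
    have : X ord0 - Y ord0 + (X ord_max - Y ord_max) = 0 by rewrite XY0 XY1; ring.
    by move/eqP; rewrite addrACA -opprD subr_eq0 => /eqP.
  by apply/dvdzP; exists (c ord0 - c ord_max); rewrite XY1; ring.
case=> XY /dvdzP [q XY1]; exists [ffun u => if u == ord0 then q else 0] => w.
rewrite sum_ord2 !lap_dipole !ffunE /=; case: (ord2_cases w) => -> /=.
  by rewrite opp_diff // XY1; ring.
by rewrite XY1; ring.
Qed.

Lemma hv_at t u : hv G (t, u == ord_max) = u.
Proof. by rewrite hv_dipole; case: (ord2_cases u) => ->. Qed.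

Lemma hv_flip_at t u v : u != v -> hv G (flip (t, u == ord_max)) = v.
Proof.
move=> uv; apply: (ord2_other (v := u)); first by rewrite eq_sym.
by rewrite -{2}(hv_at t u) hv_flip_dipole.
Qed.

Lemma pick_dipole v : (0 < m)%N ->
  exists e0, [pick h | hv G h == v] = Some (e0, v == ord_max).
Proof.
move=> m_gt0; case: pickP => [[e b] | none].
  by rewrite hv_dipole_eq => /eqP /= ->; exists e.
by have := none (Ordinal m_gt0, v == ord_max); rewrite hv_at eqxx.
Qed.

Lemma rr_steps_dipole v s s' : rr_steps G v s s' ->
  forall u, u != v -> hv G (s.2 u) = u ->
  exists k : nat, s'.2 u = iter k (Defs.rot G) (s.2 u) /\ s'.1 u = s.1 u - k%:Z.
Proof.
(* Only the non-sink [u] can fire, and its chips all go to the sink. *)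
elim=> {s s'} [s s' [x [xv _ [-> ->]]] | s | s1 s2 s3 _ IH12 _ IH23] u uv hu.
- rewrite (ord2_other uv xv); exists 1%N; rewrite !ffunE eqxx; split=> //.
  have /negbTE -> : u != hv G (flip (Defs.rot G (s.2 u))).
    by rewrite eq_sym -{2}hu -[hv G (s.2 u)]/(hv G (Defs.rot G (s.2 u))) hv_flip_dipole.
  by rewrite addr0.
- by exists 0%N; rewrite subr0.
have [k1 [s2u s2k]] := IH12 u uv hu.
have hu2 : hv G (s2.2 u) = u.
  by rewrite s2u; case: (s1.2 u) hu => e b <-; rewrite iter_rot_dipole.
have [k2 [s3u s3k]] := IH23 u uv hu2.
exists (k2 + k1)%N; split; first by rewrite iterD -s2u s3u.
by rewrite s3k s2k PoszD; ring.
Qed.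

Lemma rr_steps_fire v u (k : nat) (s : rr_state 'I_2 'I_m) :
  u != v -> s.1 u = k%:Z -> hv G (s.2 u) = u ->
  exists2 s', rr_steps G v s s' & s'.1 u = 0 /\ s'.2 u = iter k (Defs.rot G) (s.2 u).
Proof.
move=> uv; elim: k s => [|k IH] s su hu; first by exists s; [apply: rt_refl | split].
set h := Defs.rot G (s.2 u); set w := hv G (flip h).
pose s' : rr_state 'I_2 'I_m :=
  ([ffun x => s.1 x - (x == u)%:Z + (x == w)%:Z], [ffun x => if x == u then h else s.2 x]).
have /negbTE uw : u != w by rewrite /w eq_sym -hu -[hv G (s.2 u)]/(hv G h) hv_flip_dipole.
have s'u : s'.1 u = k%:Z by rewrite ffunE eqxx uw su addr0 -addn1 PoszD addrK.
have hu' : hv G (s'.2 u) = u by rewrite ffunE eqxx -hu.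
have [s'' s's'' [s''u s''rot]] := IH s' s'u hu'.
exists s''; last by rewrite s''rot ffunE eqxx -iterSr.
apply: rt_trans s's''; apply: rt_step; exists u; split=> //; first by rewrite su.
Qed.

Lemma rotor_result_dipole v u D t T' : u != v -> rotor_result G v D [set t] T' ->
  exists2 k : nat, T' = [set iter k (dipole_rot sa sb u) t] & (m %| k%:Z - D u)%Z.
Proof.
move=> uv [s0 [s1 [[s0D _ s0rot] [s01 s1_0 ->]]]].
have /andP[/eqP hu /andP[ht _]] := s0rot u uv.
have s0u : s0.2 u = (t, u == ord_max).
  by case: (s0.2 u) hu ht => e b /eqP; rewrite hv_dipole_eq in_set1 /= => /eqP <- /eqP ->.
have [k [s1u s1k]] := rr_steps_dipole s01 uv hu.
exists k.
  apply/setP=> e; rewrite !inE; apply/existsP/eqP => [[x /andP[xv /eqP <-]] | ->].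
    by rewrite (ord2_other uv xv) s1u s0u iter_rot_dipole_at.
  by exists u; rewrite uv s1u s0u iter_rot_dipole_at eqxx.
have -> : k%:Z = s0.1 u by move: (s1_0 u uv); rewrite s1k => /eqP; rewrite subr_eq0 => /eqP.
by case/(div_equiv_dipole _ _ u): s0D.
Qed.

Lemma rotor_result_dipole_iter v u D t (k : nat) :
  u != v -> deg_div D = 0 -> (m %| k%:Z - D u)%Z ->
  rotor_result G v D [set t] [set iter k (dipole_rot sa sb u) t].
Proof.
move=> uv D0 mk.
pose s0 : rr_state 'I_2 'I_m :=
  ([ffun x => if x == u then k%:Z else - k%:Z], [ffun x => (t, x == ord_max)]).
have hu : hv G (s0.2 u) = u by rewrite ffunE hv_at.
have s0u : s0.1 u = k%:Z by rewrite ffunE eqxx.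
have [s1 s01 [s1u s1rot]] := rr_steps_fire uv s0u hu.
exists s0, s1; split; [split=> [|x xv|x xv] | split=> [|x xv|]].
- apply/(div_equiv_dipole _ _ u); rewrite s0u D0 deg_div2 !ffunE; split=> //.
  by move: uv; case: (ord2_cases u) => -> _; rewrite /= ?addrN ?addNr.
- by rewrite (ord2_other uv xv) s0u.
- rewrite (ord2_other uv xv) hu eqxx /oriented_toward ffunE in_set1 eqxx /=.
  by rewrite (hv_flip_at t uv) connect0.
- exact: s01.
- by rewrite (ord2_other uv xv).
apply/setP=> e; rewrite !inE; apply/eqP/existsP => [-> | [x /andP[xv /eqP <-]]].
  by exists u; rewrite uv s1rot ffunE iter_rot_dipole_at eqxx.
by rewrite (ord2_other uv xv) s1rot ffunE iter_rot_dipole_at.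
Qed.

Section EdgeCycles.
Hypotheses (sa_cycle : edge_cycle sa) (sb_cycle : edge_cycle sb).

Lemma rotation_uniq b : uniq (if b then sb else sa).
Proof. by case: b; [case/andP: sb_cycle | case/andP: sa_cycle]. Qed.

Lemma mem_rotation b e : e \in (if b then sb else sa).
Proof.
apply: mem_uniq_card (rotation_uniq b) _; rewrite card_ord.
by case: b; [case/andP: sb_cycle | case/andP: sa_cycle] => _ /eqP.
Qed.

Lemma rotation_inj b : injective (next (if b then sb else sa)).
Proof. exact: can_inj (prev_next (rotation_uniq b)). Qed.

Lemma rot_dipole_inj : injective (Defs.rot G).
Proof. by move=> [e b] [e' b'] [/= ee' bb']; subst b'; rewrite (rotation_inj ee'). Qed.

Lemma face_dipole_inj : injective (face G).
Proof. by move=> [e b] [e' b'] /rot_dipole_inj [-> /negb_inj ->]. Qed.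

Lemma dipole_ribbon : (0 < m)%N -> is_ribbon_graph G.
Proof.
move=> m_gt0; split=> //.
- by rewrite card_ord.
- by move=> x y; apply: (connect_dipole _ _ (in_setT (Ordinal m_gt0))).
- exact: rot_dipole_inj.
split=> [// | [e b] [e' b']]; rewrite !hv_dipole /= => bb'.
have {bb'} <- : b = b' by move: bb'; case: b; case: b'.
have conn : fconnect (next (if b then sb else sa)) e e'.
  by rewrite (fconnect_cycle (cycle_next (rotation_uniq b)) (mem_rotation b e)) mem_rotation.
by rewrite -(iter_findex conn) -iter_rot_dipole fconnect_iter.
Qed.

Lemma iter_dipole_rot_mod u t (k k' : nat) : (m %| k%:Z - k'%:Z)%Z ->
  iter k (dipole_rot sa sb u) t = iter k' (dipole_rot sa sb u) t.
Proof.
rewrite -eqz_mod_dvd !modz_nat => /eqP [kk'].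
have order_t : fingraph.order (dipole_rot sa sb u) t = m.
  rewrite (order_cycle (cycle_next (rotation_uniq _)) (rotation_uniq _) (mem_rotation _ t)).
  by case: (u == ord_max); [case/andP: sb_cycle | case/andP: sa_cycle] => _ /eqP.
have per : iter m (dipole_rot sa sb u) t = t.
  by have := iter_order (@rotation_inj (u == ord_max)) t; rewrite order_t.
by rewrite (iter_modn k per) (iter_modn k' per) kk'.
Qed.

Lemma rotor_torsor_dipole v u D t (k : nat) :
  u != v -> deg_div D = 0 -> (m %| k%:Z - D u)%Z ->
  rotor_torsor G v D [set t] = [set iter k (dipole_rot sa sb u) t].
Proof.
move=> uv D0 mk; rewrite /rotor_torsor.
have := epsilon_spec (inhabits [set t]) _ (ex_intro _ _ (rotor_result_dipole_iter t uv D0 mk)).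
case/(rotor_result_dipole uv) => k' -> mk'; congr [set _].
apply: iter_dipole_rot_mod.
have -> : k'%:Z - k%:Z = (k'%:Z - D u) - (k%:Z - D u) by ring.
exact: rpredB.
Qed.

End EdgeCycles.

End Dipole.

Section DipoleScaling.
Variables (m : nat) (sa sb sa' sb' : seq 'I_m) (c : nat).
Local Notation G := (dipole sa sb).
Local Notation G' := (dipole sa' sb').

Lemma rotor_torsor_dipole_pow (r : nat) :
  (0 < m)%N -> edge_cycle sa -> edge_cycle sb -> edge_cycle sa' -> edge_cycle sb' ->
  (forall e, next sa' e = iter r (next sa) e) -> (forall e, next sb' e = iter r (next sb) e) ->
  (m %| c%:Z * r%:Z - 1)%Z -> forall v D t, deg_div D = 0 ->
  rotor_torsor G' v (D *+ c) [set t] = rotor_torsor G v D [set t].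
Proof.
move=> m_gt0 sa_cyc sb_cyc sa'_cyc sb'_cyc rot_a rot_b cr v D t D0.
have [u uv] : exists u : 'I_2, u != v.
  by case: (ord2_cases v) => ->; [exists ord_max | exists ord0].
have [k mk] := exists_nat_mod (D u) m_gt0.
have mkc : (m %| (k * c)%N%:Z - (D *+ c) u)%Z.
  by rewrite ffunMnE (_ : _ - _ = (k%:Z - D u) *+ c) ?rpredMn // PoszM; ring.
have Dc0 : deg_div (D *+ c) = 0 by rewrite deg_divMn D0 mul0rn.
rewrite (rotor_torsor_dipole sa_cyc sb_cyc t uv D0 mk).
rewrite (rotor_torsor_dipole sa'_cyc sb'_cyc t uv Dc0 mkc); congr [set _].
have rot_u : dipole_rot sa' sb' u =1 iter r (dipole_rot sa sb u).
  by rewrite /dipole_rot; case: (u == ord_max).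
rewrite (eq_iter rot_u) -iterM; apply: iter_dipole_rot_mod => //.
rewrite (_ : _ - _ = k%:Z * (c%:Z * r%:Z - 1)) ?PoszM; last by ring.
exact: dvdz_mull.
Qed.

Lemma bernardi_torsor_dipole_scale (c' : nat) v D t :
  (m %| c%:Z * c'%:Z - 1)%Z -> deg_div D = 0 ->
  (forall t', deg_div (bern_div G v [set t']) = deg_div (bern_div G v [set t])) ->
  (forall t', deg_div (bern_div G' v [set t']) = deg_div (bern_div G' v [set t])) ->
  (forall t', (m %| (bern_div G' v [set t'] ord_max - bern_div G' v [set t] ord_max)
                   - (bern_div G v [set t'] ord_max - bern_div G v [set t] ord_max) *+ c)%Z) ->
  bernardi_torsor G' v (D *+ c) [set t] = bernardi_torsor G v D [set t].
Proof.
(* Both torsors choose, by [epsilon], a tree satisfying the same relation. *)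
move=> cc' D0 degG degG' classes; rewrite /bernardi_torsor; congr epsilon.
apply: functional_extensionality => T'; apply: propositional_extensionality.
rewrite /bernardi_result !spanning_tree_dipole.
have [/cards1P [t' ->] | /negbTE nT] := boolP (#|T'| == 1%N); last by split=> -[].
rewrite (div_equiv_dipole sa sb _ _ ord_max) (div_equiv_dipole sa' sb' _ _ ord_max).
rewrite !deg_divD deg_divMn D0 mul0rn !addr0 degG degG'.
rewrite !ffunE ffunMnE !opprD !addrA (dvdz_scale_iff _ cc' (classes t')).
by split=> -[_ [_ ?]].
Qed.

Lemma pic0_iso_dipole_scale (c' : nat) :
  (m %| c%:Z * c'%:Z - 1)%Z -> pic0_iso G G' (fun D => D *+ c).
Proof.
move=> cc'; pose equivE := div_equiv_dipole _ _ _ _ ord_max.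
split.
- by move=> D D0; rewrite deg_divMn D0 mul0rn.
- move=> D1 D2 D1_0 D2_0 /equivE [_ mD]; apply/equivE.
  rewrite !deg_divMn D1_0 D2_0 !ffunMnE -mulrnBl; split=> //; exact: rpredMn.
- by move=> D1 D2 _ _; apply/equivE; rewrite mulrnDl subrr; split.
- move=> D1 D2 D1_0 D2_0 /equivE [_ mD]; apply/equivE.
  by rewrite D1_0 D2_0; split=> //; apply: (dvdz_cancel cc'); rewrite mulrnBl -!ffunMnE.
move=> D' D'0; exists (D' *+ c'); first by rewrite deg_divMn D'0 mul0rn.
apply/equivE; rewrite !deg_divMn D'0 !mul0rn !ffunMnE; split=> //.
rewrite (_ : _ - _ = D' ord_max * (c%:Z * c'%:Z - 1)); last by ring.
exact: dvdz_mull.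
Qed.

Lemma tree_bijection_dipole : tree_bijection G G' id.
Proof.
split=> [T | T1 T2 _ _ // | T' T'_tree]; first by rewrite !spanning_tree_dipole.
by exists T'; rewrite // spanning_tree_dipole -(spanning_tree_dipole sa' sb').
Qed.

End DipoleScaling.

Definition rho0 : seq 'I_5 := [:: 0; 1; 2; 3; 4].
Definition rho1 : seq 'I_5 := [:: 0; 1; 3; 4; 2].
Definition rho0' : seq 'I_5 := [:: 0; 3; 1; 4; 2].
Definition rho1' : seq 'I_5 := [:: 0; 4; 1; 2; 3].

Definition G5 := dipole rho0 rho1.
Definition G5' := dipole rho0' rho1'.

Lemma edge_cycles5 :
  [/\ edge_cycle rho0, edge_cycle rho1, edge_cycle rho0' & edge_cycle rho1'].
Proof. by split; vm_compute. Qed.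

Lemma rho'_cube :
  (forall e, next rho0' e = iter 3 (next rho0) e) /\
  (forall e, next rho1' e = iter 3 (next rho1) e).
Proof. by split=> e; apply/eqP; move: e; apply/all_ordP; vm_compute. Qed.

Lemma ribbon5 : is_ribbon_graph G5 /\ is_ribbon_graph G5'.
Proof. by have [? ? ? ?] := edge_cycles5; split; apply: dipole_ribbon. Qed.

Lemma genus_G5 : genus G5 = 2%N.
Proof.
have [c0 c1 _ _] := edge_cycles5.
pose s := traject (face G5) (0, false) 10.
have [s_cycle s_uniq] : fcycle (face G5) s /\ uniq s by split; vm_compute.
have one_face : ncycles G5 = 1%N.
  apply: (ncycles_eq1 (face_dipole_inj c0 c1) (h0 := (0, false))) => h.
  rewrite (fconnect_cycle s_cycle (mem_head _ _)); apply: mem_uniq_card s_uniq _.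
  by rewrite size_traject card_prod card_ord card_bool.
by rewrite /genus one_face !card_ord.
Qed.

Lemma genus_G5' : (genus G5' <= 1)%N.
Proof.
have [_ _ c0' c1'] := edge_cycles5.
have : (1 < ncycles G5')%N.
  apply: (@ncycles_gt1 _ _ _ (face_dipole_inj c0' c1') (0, false) (0, true)).
  have s_cycle : fcycle (face G5') (traject (face G5') (0, false) 6) by vm_compute.
  by rewrite (fconnect_cycle s_cycle (mem_head _ _)); vm_compute.
rewrite /genus !card_ord => nc.
have : (7 - (2 + ncycles G5') <= 3)%N by lia.
by move/half_leq.
Qed.

Definition tour5 (H : ribbon_graph 'I_2 'I_5) (v : 'I_2) (e0 t : 'I_5) :=
  traject (bern_step1 H t) (e0, v == ord_max) 10.

Definition chips5 (H : ribbon_graph 'I_2 'I_5) (v : 'I_2) (e0 t : 'I_5) (u : 'I_2) : int :=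
  (tour_chips H t (e0, v == ord_max) (tour5 H v e0 t) u)%:Z.

(* [class H t'] represents [D_t'] - [D_t] in Pic = Z/5.  The data is checked for every
   starting edge [e0], since the half-edge chosen by [pick] in [bern_div] cannot be
   evaluated. *)
Definition bernardi_data5 (v : 'I_2) (e0 t : 'I_5) : bool :=
  let tour_ok H := fcycle (bern_step1 H t) (tour5 H v e0 t) && uniq (tour5 H v e0 t) in
  let degree H := chips5 H v e0 t ord0 + chips5 H v e0 t ord_max in
  let class H t' := chips5 H v e0 t' ord_max - chips5 H v e0 t ord_max in
  [&& tour_ok G5, tour_ok G5', degree G5 == 4, degree G5' == 4 &
      all_ord (fun t' => 5 %| class G5' t' - class G5 t' *+ 2)%Z].

Lemma bernardi_data5_ok : all_ord (fun v => all_ord (fun e0 => all_ord (bernardi_data5 v e0))).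
Proof. by vm_compute. Qed.

Lemma bernardi_torsor_G5 v D t : deg_div D = 0 ->
  bernardi_torsor G5' v (D *+ 2) [set t] = bernardi_torsor G5 v D [set t].
Proof.
move=> D0; have [e0 pickG] := pick_dipole rho0 rho1 v (isT : (0 < 5)%N).
have pickG' : [pick h | hv G5' h == v] = Some (e0, v == ord_max) := pickG.
have /all_ordP/(_ v)/all_ordP/(_ e0)/all_ordP data := bernardi_data5_ok.
have bdG t' u : bern_div G5 v [set t'] u = chips5 G5 v e0 t' u.
  by case/and5P: (data t') => /andP[? ?] _ _ _ _; apply: bern_div_tour.
have bdG' t' u : bern_div G5' v [set t'] u = chips5 G5' v e0 t' u.
  by case/and5P: (data t') => _ /andP[? ?] _ _ _; apply: bern_div_tour.
have degree t' : deg_div (bern_div G5 v [set t']) = 4 /\ deg_div (bern_div G5' v [set t']) = 4.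
  case/and5P: (data t') => _ _ /eqP d /eqP d' _.
  by split; [rewrite deg_div2 !bdG d | rewrite deg_div2 !bdG' d'].
apply: (bernardi_torsor_dipole_scale (c' := 3)) => // t'.
- by case: (degree t') (degree t) => -> _ [-> _].
- by case: (degree t') (degree t) => _ -> [_ ->].
rewrite (bdG' t' ord_max) (bdG' t ord_max) (bdG t' ord_max) (bdG t ord_max).
by case/and5P: (data t) => _ _ _ _ /all_ordP; apply.
Qed.

Theorem theorem1p5 (alpha : torsor_kind) :
  exists (n m m' : nat) (G : ribbon_graph 'I_n 'I_m) (G' : ribbon_graph 'I_n 'I_m')
         (phi : {set 'I_m} -> {set 'I_m'})
         (gamma : {ffun 'I_n -> int} -> {ffun 'I_n -> int}),
    [/\ is_ribbon_graph G, is_ribbon_graph G' & genus G != genus G'] /\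
    (* phi : T(G) -> T(G') is a bijection *)
    [/\ (forall T, spanning_tree G T -> spanning_tree G' (phi T)),
        (forall T1 T2, spanning_tree G T1 -> spanning_tree G T2 ->
                       phi T1 = phi T2 -> T1 = T2) &
        (forall T', spanning_tree G' T' -> exists2 T, spanning_tree G T & phi T = T')] /\
    (* gamma induces a group isomorphism Pic^0(G) -> Pic^0(G') *)
    [/\ (forall D, deg_div D = 0 -> deg_div (gamma D) = 0),
        (forall D1 D2, deg_div D1 = 0 -> deg_div D2 = 0 ->
           div_equiv G D1 D2 -> div_equiv G' (gamma D1) (gamma D2)),
        (forall D1 D2, deg_div D1 = 0 -> deg_div D2 = 0 ->
           div_equiv G' (gamma (D1 + D2)) (gamma D1 + gamma D2)),
        (forall D1 D2, deg_div D1 = 0 -> deg_div D2 = 0 ->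
           div_equiv G' (gamma D1) (gamma D2) -> div_equiv G D1 D2) &
        (forall D', deg_div D' = 0 ->
           exists2 D, deg_div D = 0 & div_equiv G' (gamma D) D')] /\
    (* compatibility of the torsors *)
    (forall (v : 'I_n) (D : {ffun 'I_n -> int}) (T : {set 'I_m}),
       deg_div D = 0 -> spanning_tree G T ->
       phi (torsor alpha G v D T) = torsor alpha G' v (gamma D) (phi T)).
Proof.
exists 2%N, 5%N, 5%N, G5, G5', id, (fun D => D *+ 2).
have [cyc0 cyc1 cyc0' cyc1'] := edge_cycles5; have [rot0 rot1] := rho'_cube.
split; [|split; [|split]].
- have [rib rib'] := ribbon5; split=> //.
  by apply/eqP => same_genus; have := genus_G5'; rewrite -same_genus genus_G5.
- exact: tree_bijection_dipole.
- exact: (pic0_iso_dipole_scale _ _ _ _ (c' := 3)).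
move=> v D T D0; rewrite spanning_tree_dipole => /cards1P [t ->].
case: alpha => /=; last by rewrite bernardi_torsor_G5.
by rewrite (rotor_torsor_dipole_pow (r := 3) (isT : (0 < 5)%N) cyc0 cyc1 cyc0' cyc1'
             rot0 rot1).
Qed.
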